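(* Let $X$ be a real reflexive Banach space satisfying (CFPP). Let $F = \bigcap_{k=1}^\infty F_k$, where for each $k$, $F_k = \{x \in X : f_k(x) \le d_k\}$ with $f_k \in X^*$, $\|f_k\| = 1$, $d_k \ge 0$, and $F_k$ is a contractive set. For each $k$ let $y_k \in X$ with $f_k(y_k) = 1$ be such that $P_k x = x - f_k(x) y_k$ defines a linear projection of norm one from $X$ onto $\ker(f_k)$. If $0 \notin \mathrm{cl}(\mathrm{conv}(\{y_k\}_{k \in \mathbb{N}}))$, then $F$ is a contractive set.
   Context: A real Banach space $X$ has (CFPP) if for every non-empty, convex, closed and bounded set $D \subset X$ and every nonexpansive mapping $T : X \to X$ (i.e. $\|Tx - Ty\| \le \|x-y\|$) with $T(D) \subset D$, $T$ has a fixed point in $D$. A non-empty set $D \subset X$ is contractive if there exists $P : X \to D$ with $P|_D = \mathrm{id}_D$ and $\|Px - Py\| \le \|x-y\|$ for all $x,y \in X$. $\mathrm{cl}(\mathrm{conv}(\cdot))$ is the norm-closed convex hull. *)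

From HB Require Import structures.
From mathcomp Require Import all_boot all_order all_algebra.
From mathcomp Require Import all_classical all_reals all_analysis.
Set Implicit Arguments. Unset Strict Implicit. Unset Printing Implicit Defensive.
Import Order.TTheory GRing.Theory Num.Theory.
Import numFieldNormedType.Exports.
Local Open Scope classical_set_scope.
Local Open Scope ring_scope.

Section Defs.
Variables (R : realType) (X : normedModType R).

Definition nonexpansive (T : X -> X) := forall x y, `|T x - T y| <= `|x - y|.

Definition convex_subset (D : set X) :=
  forall x y t, D x -> D y -> 0 <= t -> t <= 1 -> D (t *: x + (1 - t) *: y).

Definition bounded_subset (D : set X) := exists M : R, forall x, D x -> `|x| <= M.

Definition CFPP := forall (D : set X), D !=set0 -> convex_subset D -> closed D ->
  bounded_subset D -> forall T : X -> X, nonexpansive T -> T @` D `<=` D ->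
  exists2 x, D x & T x = x.

Definition contractive (D : set X) := D !=set0 /\
  exists P : X -> X, (forall x, D (P x)) /\ (forall x, D x -> P x = x) /\ nonexpansive P.

Definition linear_functional (f : X -> R) :=
  forall (a : R) x y, f (a *: x + y) = a * f x + f y.
Definition dual_elem (f : X -> R) := linear_functional f /\ continuous f.

Definition dual_norm (f : X -> R) : R := sup [set `|f x| | x in [set x | `|x| <= 1]].
Definition op_norm (g : X -> X) : R := sup [set `|g x| | x in [set x | `|x| <= 1]].

Definition reflexive_space := forall phi : (X -> R) -> R,
  (forall (a : R) f g, dual_elem f -> dual_elem g ->
     phi (fun x => a * f x + g x) = a * phi f + phi g) ->
  (exists C : R, forall f, dual_elem f -> `|phi f| <= C * dual_norm f) ->
  exists x : X, forall f, dual_elem f -> phi f = f x.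

Definition conv_hull (A : set X) : set X :=
  [set z | exists (n : nat) (w : 'I_n -> R) (p : 'I_n -> X),
     [/\ forall i, 0 <= w i, \sum_i w i = 1, forall i, A (p i) &
         z = \sum_i w i *: p i]].

End Defs.

(** Let [Q_k x = x - max (f_k x - d_k, 0) y_k]. Because [P_k] has norm one,
    [Q_k x - Q_k z] is a convex combination of [x - z] and [P_k (x - z)], so
    [Q_k] is a nonexpansive retraction onto [F_k]. Compose the [Q_k] along a
    schedule that visits every [k] infinitely often (step [n] uses the 2-adic
    valuation of [n + 1]). The orbit of [x] moves by [x - x_n = sum c_i y_(k_i)]
    with [c_i >= 0]; since the closed convex hull of the [y_k] stays at distance
    [r > 0] from [0], [r * sum c_i <= |x - x_n| <= 2 |x|]. Hence the corrections
    are summable, the orbit converges, its limit lies in every [F_k] and depends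
    nonexpansively on [x]. *)

From HB Require Import structures.
From mathcomp Require Import all_boot all_order all_algebra.
From mathcomp Require Import all_classical all_reals all_analysis.
From mathcomp Require Import lra.
Set Implicit Arguments. Unset Strict Implicit. Unset Printing Implicit Defensive.
Import Order.TTheory GRing.Theory Num.Theory.
Import numFieldNormedType.Exports.
Local Open Scope classical_set_scope.
Local Open Scope ring_scope.

Section LinearFunctional.
Variables (R : realType) (X : normedModType R) (f : X -> R).
Hypothesis f_linear : linear_functional f.

Lemma linear_functional0 : f 0 = 0.
Proof. by have := f_linear 1 0 0; rewrite scale1r addr0 mul1r; lra. Qed.

Lemma linear_functionalZ a x : f (a *: x) = a * f x.
Proof. by rewrite -[a *: x]addr0 f_linear linear_functional0 addr0. Qed.

Lemma linear_functionalB x z : f (x - z) = f x - f z.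
Proof.
by rewrite -[x]scale1r -scaleN1r f_linear linear_functionalZ scale1r; lra.
Qed.

End LinearFunctional.

Section NormBounds.
Variables (R : realType) (X : normedModType R).

Lemma norm_le_of_op_norm1 (g : X -> X) :
  (forall a x, g (a *: x) = a *: g x) -> op_norm g = 1 ->
  forall x, `|g x| <= `|x|.
Proof.
move=> gZ g1 x.
set S := [set `|g z| | z in [set z | `|z| <= 1]].
have S_sup : has_sup S.
  apply: contrapT => /sup_out S0.
  by move: g1; rewrite /op_norm -/S S0 => /eqP; rewrite eq_sym oner_eq0.
have [->|x0] := eqVneq x 0.
  by rewrite -(scale0r (0 : X)) gZ !normrZ normr0 !mul0r.
have nx : 0 < `|x| by rewrite normr_gt0.
have := sup_upper_bound S_sup (ex_intro2 _ _ (`|x|^-1 *: x) _ erefl).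
rewrite -/(op_norm g) g1 gZ normrZ normfV normr_id ler_pdivrMl // mulr1; apply.
by rewrite /= normrZ normfV normr_id mulVf // gt_eqF.
Qed.

Lemma norm_le2_of_projection (f : X -> R) (y : X) :
  (forall x, `|x - f x *: y| <= `|x|) -> dual_norm f = 1 -> `|y| <= 2.
Proof.
move=> proj_le f1.
have [->|y0] := eqVneq y 0; first by rewrite normr0.
have ny : 0 < `|y| by rewrite normr_gt0.
have fy_le x : `|f x| * `|y| <= 2 * `|x|.
  rewrite -normrZ -[f x *: y](subKr x) (le_trans (ler_normB _ _)) //.
  by have := proj_le x; lra.
suff : dual_norm f <= 2 / `|y| by rewrite f1 ler_pdivlMr // mul1r.
apply: ge_sup; first by exists `|f 0|, 0; rewrite //= normr0.
move=> _ [x /= x1 <-]; rewrite ler_pdivlMr //.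
by apply: le_trans (fy_le x) _; lra.
Qed.

Lemma not_closure0_norm_ge (C : set X) :
  ~ closure C 0 -> exists2 r : R, 0 < r & forall w, C w -> r <= `|w|.
Proof.
apply: contra_notP => C_small B /nbhs_ballP [r /= r0 rB].
have /existsNP [w /not_implyP [Cw /negP]] : ~ (forall w, C w -> r <= `|w|).
  by move=> h; apply: C_small; exists r.
rewrite -ltNge => wr; exists w; split => //; apply: rB.
by rewrite -ball_normE /ball_ /= sub0r normrN.
Qed.

Lemma conv_hull_norm_ge (A : set X) (r : R) n (c : 'I_n -> R) (p : 'I_n -> X) :
  (forall w, conv_hull A w -> r <= `|w|) ->
  (forall i, 0 <= c i) -> (forall i, A (p i)) ->
  r * \sum_i c i <= `|\sum_i c i *: p i|.
Proof.
move=> A_ge c_ge0 Ap; set s := \sum_i c i.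
have [s0|s_neq0] := eqVneq s 0; first by rewrite s0 mulr0.
have s_gt0 : 0 < s by rewrite lt_def s_neq0 sumr_ge0.
have : conv_hull A (s^-1 *: \sum_i c i *: p i).
  exists n, (fun i => c i / s), p; split => //.
  - by move=> i; rewrite divr_ge0 // ltW.
  - by rewrite -mulr_suml divff.
  - by rewrite scaler_sumr; apply: eq_bigr => i _; rewrite scalerA mulrC.
move=> /A_ge; rewrite normrZ gtr0_norm ?invr_gt0 // => h.
by rewrite -ler_pdivlMr // mulrC.
Qed.

End NormBounds.

Section Limits.
Variable R : realType.

Lemma cvgn_of_increments_le (X : completeNormedModType R) (u : X ^nat) (v : R ^nat) :
  cvgn v -> (forall m n, (m <= n)%N -> `|u n - u m| <= v n - v m) -> cvgn u.
Proof.
move=> /cvgrPdist_lt v_cvg uv; apply/cauchy_cvgP/cauchy_exP => e e0.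
have /v_cvg [N _ vN] : 0 < e / 2 by rewrite divr_gt0.
exists (u N), N => // n /= Nn; rewrite -ball_normE /ball_ /= distrC.
have := uv N n Nn.
move: (vN N (leqnn N)) (vN n Nn) => /ltr_normlP[? ?] /ltr_normlP[? ?]; lra.
Qed.

Lemma nonexpansive_lim (X : normedModType R) (g : nat -> X -> X) :
  (forall n, nonexpansive (g n)) -> (forall x, cvgn (g ^~ x)) ->
  nonexpansive (fun x => lim (g ^~ x @ \oo)).
Proof.
move=> g_ne g_cvg x z.
apply: (cvgr_to_le (cvg_norm (cvgB (g_cvg x) (g_cvg z)))).
by apply: nearW => n; apply: g_ne.
Qed.

End Limits.

Definition schedule (n : nat) : nat := logn 2 n.+1.

Definition visit (k j : nat) : nat := (2 ^ k * j.*2.+1).-1.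

Lemma leq_visit k j : (j <= visit k j)%N.
Proof.
rewrite -ltnS prednK ?muln_gt0 ?expn_gt0 //.
by apply: leq_trans (leq_pmull _ _); rewrite ?expn_gt0 // ltnS -addnn leq_addr.
Qed.

Lemma schedule_visit k j : schedule (visit k j) = k.
Proof.
rewrite /schedule /visit prednK ?muln_gt0 ?expn_gt0 //.
rewrite lognM ?expn_gt0 // pfactorK // logn_coprime ?addn0 //.
by rewrite coprime2n /= odd_double.
Qed.

Lemma visit_cvgn k : visit k @ \oo --> \oo.
Proof.
move=> P [N _ PN]; exists N => // j /= Nj.
by apply: PN; apply: leq_trans Nj (leq_visit k j).
Qed.

Lemma subr_max0_interp (R : realFieldType) (p q : R) :
  exists2 t : R, 0 <= t <= 1 & Num.max p 0 - Num.max q 0 = t * (p - q).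
Proof.
case: (lerP p 0) => hp; case: (lerP q 0) => hq.
- by exists 0; rewrite ?lexx ?ler01 // mul0r subrr.
- exists (q / (q - p)); last by rewrite -(opprB q p) mulrN divfK ?gt_eqF //; lra.
  by rewrite divr_ge0 ?ler_pdivrMr /=; lra.
- exists (p / (p - q)); last by rewrite divfK ?gt_eqF //; lra.
  by rewrite divr_ge0 ?ler_pdivrMr /=; lra.
- by exists 1; rewrite ?lexx ?ler01 // mul1r.
Qed.

Section HalfspaceProjection.
Variables (R : realType) (X : normedModType R) (f : X -> R) (d : R) (y : X).

Definition halfspace_proj (x : X) : X := x - Num.max (f x - d) 0 *: y.

Lemma halfspace_proj_id x : f x <= d -> halfspace_proj x = x.
Proof. by move=> fx; rewrite /halfspace_proj max_r ?subr_le0 // scale0r subr0. Qed.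

Hypothesis f_linear : linear_functional f.
Hypothesis proj_le : forall x, `|x - f x *: y| <= `|x|.

Lemma halfspace_proj_nonexpansive : nonexpansive halfspace_proj.
Proof.
move=> x z; have [t /andP[t0 t1] max_sub] := subr_max0_interp (f x - d) (f z - d).
set u := x - z.
have -> : halfspace_proj x - halfspace_proj z = (1 - t) *: u + t *: (u - f u *: y).
  rewrite scalerBl scale1r (scalerBr t u) scalerA addrA subrK -scaleNr.
  rewrite /halfspace_proj opprD addrACA opprK -scaleNr -scalerDl.
  congr (_ + _ *: _); rewrite linear_functionalB //; lra.
rewrite (le_trans (ler_normD _ _)) // !normrZ ger0_norm ?subr_ge0 // ger0_norm //.
have := ler_wpM2l t0 (proj_le u); lra.
Qed.

End HalfspaceProjection.

Section ScheduledProjections.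
Variables (R : realType) (X : completeNormedModType R).
Variables (f : nat -> X -> R) (d : nat -> R) (y : nat -> X).

Fixpoint orbit (x : X) (n : nat) : X :=
  if n is m.+1 then
    halfspace_proj (f (schedule m)) (d (schedule m)) (y (schedule m)) (orbit x m)
  else x.

Definition excess (x : X) (n : nat) : R :=
  Num.max (f (schedule n) (orbit x n) - d (schedule n)) 0.

Definition mass (x : X) (n : nat) : R := \sum_(i < n) excess x i.

Definition orbit_lim (x : X) : X := lim (orbit x @ \oo).

Lemma excess_ge0 x n : 0 <= excess x n.
Proof. by rewrite /excess le_max lexx orbT. Qed.

Lemma massS x n : mass x n.+1 = mass x n + excess x n.
Proof. by rewrite /mass big_ord_recr. Qed.

Lemma orbit_id x n : (forall k, f k x <= d k) -> orbit x n = x.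
Proof. by move=> x_in; elim: n => //= n ->; rewrite halfspace_proj_id. Qed.

Lemma orbit_sub x n :
  x - orbit x n = \sum_(i < n) excess x i *: y (schedule i).
Proof.
elim: n => [|n IH]; first by rewrite subrr big_ord0.
by rewrite big_ord_recr -IH /= /halfspace_proj opprB addrA addrAC.
Qed.

Hypothesis f_linear : forall k, linear_functional (f k).
Hypothesis proj_le : forall k x, `|x - f k x *: y k| <= `|x|.

Lemma orbit_nonexpansive n : nonexpansive (orbit ^~ n).
Proof.
move=> x z; elim: n => //= n; apply: le_trans.
exact: halfspace_proj_nonexpansive.
Qed.

Hypothesis d_ge0 : forall k, 0 <= d k.

Lemma orbit0 n : orbit 0 n = 0.
Proof. by apply: orbit_id => k; rewrite linear_functional0. Qed.

Variable r : R.
Hypothesis conv_hull_ge : forall w, conv_hull (range y) w -> r <= `|w|.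

Lemma mass_le x n : r * mass x n <= 2 * `|x|.
Proof.
have y_in (i : 'I_n) : range y (y (schedule i)) by exists (schedule i).
apply: le_trans (conv_hull_norm_ge conv_hull_ge (fun i => excess_ge0 x i) y_in) _.
rewrite -orbit_sub (le_trans (ler_normB _ _)) //.
have := orbit_nonexpansive n x 0; rewrite orbit0 !subr0; lra.
Qed.

Hypothesis r_gt0 : 0 < r.

Lemma mass_cvg x : cvgn (mass x).
Proof.
apply: nondecreasing_is_cvgn.
  by apply/nondecreasing_seqP => n; rewrite massS lerDl excess_ge0.
by exists (2 * `|x| / r) => _ [n _ <-]; rewrite ler_pdivlMr // mulrC mass_le.
Qed.

Lemma excess_cvg0 x : excess x @ \oo --> 0.
Proof.
have -> : excess x = (fun n => mass x n.+1 - mass x n).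
  by apply/funext => n; rewrite massS addrC addKr.
by rewrite -(subrr (lim (mass x @ \oo))); apply: cvgB; rewrite ?cvg_shiftS; apply: mass_cvg.
Qed.

Hypothesis y_le : forall k, `|y k| <= 2.

Lemma orbit_increment_le x m n : (m <= n)%N ->
  `|orbit x n - orbit x m| <= 2 * mass x n - 2 * mass x m.
Proof.
move=> /subnK <-; elim: (n - m)%N => [|k IH]; first by rewrite add0n !subrr normr0.
rewrite addSn massS /= /halfspace_proj -/(excess x (k + m)) addrAC.
apply: (le_trans (ler_normB _ _)); rewrite normrZ ger0_norm ?excess_ge0 //.
have := ler_wpM2l (excess_ge0 x (k + m)) (y_le (schedule (k + m))); lra.
Qed.

Lemma orbit_cvg x : cvgn (orbit x).
Proof.
apply: (cvgn_of_increments_le (v := fun n => 2 * mass x n)) (orbit_increment_le x).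
by apply: is_cvgM; [apply: is_cvg_cst | apply: mass_cvg].
Qed.

Lemma orbit_lim_id x : (forall k, f k x <= d k) -> orbit_lim x = x.
Proof.
move=> x_in; rewrite /orbit_lim (_ : orbit x = fun=> x) ?lim_cst //.
by apply/funext => n; apply: orbit_id.
Qed.

Lemma orbit_lim_nonexpansive : nonexpansive orbit_lim.
Proof. exact: nonexpansive_lim orbit_nonexpansive orbit_cvg. Qed.

Hypothesis f_cont : forall k, continuous (f k).

Lemma orbit_lim_halfspace x k : f k (orbit_lim x) <= d k.
Proof.
have f_orbit_visit : (f k \o (orbit x \o visit k)) @ \oo --> f k (orbit_lim x).
  apply: continuous_cvg; first exact: f_cont.
  by apply: cvg_comp (visit_cvgn k) _; apply: orbit_cvg.
rewrite -subr_le0; apply: (ler_cvg_to (cvgB f_orbit_visit (cvg_cst (d k)))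
  (cvg_comp _ _ (visit_cvgn k) (excess_cvg0 x))).
by apply: nearW => j /=; rewrite /excess schedule_visit le_max lexx.
Qed.

End ScheduledProjections.

Theorem theorem22 (R : realType) (X : completeNormedModType R)
  (f : nat -> X -> R) (d : nat -> R) (y : nat -> X) :
  reflexive_space X -> CFPP X ->
  (forall k, dual_elem (f k)) ->
  (forall k, dual_norm (f k) = 1) ->
  (forall k, 0 <= d k) ->
  (forall k, contractive [set x : X | f k x <= d k]) ->
  (forall k, f k (y k) = 1) ->
  (forall k, op_norm (fun x : X => x - f k x *: y k) = 1) ->
  ~ closure (conv_hull (range y)) 0 ->
  contractive (\bigcap_k [set x : X | f k x <= d k]).
Proof.
move=> _ _ f_dual f_norm d_ge0 _ _ proj_norm y_gap.
have f_linear k := (f_dual k).1.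
have f_cont k := (f_dual k).2.
have proj_le k : forall x, `|x - f k x *: y k| <= `|x|.
  apply: norm_le_of_op_norm1 (proj_norm k) => a x.
  by rewrite linear_functionalZ // scalerBr scalerA.
have y_le k : `|y k| <= 2 := norm_le2_of_projection (proj_le k) (f_norm k).
have [r r_gt0 conv_ge] := not_closure0_norm_ge y_gap.
split; first by exists 0 => k _ /=; rewrite linear_functional0.
exists (orbit_lim f d y); split; [|split].
- move=> x k _.
  exact: (orbit_lim_halfspace f_linear proj_le d_ge0 conv_ge r_gt0 y_le f_cont x k).
- by move=> x x_in; apply: orbit_lim_id => k; apply: x_in.
- exact: (orbit_lim_nonexpansive f_linear proj_le d_ge0 conv_ge r_gt0 y_le).
Qed.
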